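(* Under a non-stretching curve evolution $\gamma_t=r_0\gamma+r_1\gamma'+r_2\gamma''$ with $r_0=-r_1'-\tfrac13(r_2''+2p_1r_2)$, the invariants $k_1=p_1$, $k_2=p_0-p_1'$ evolve by \[ \begin{pmatrix}k_1\\ k_2\end{pmatrix}_t=\mathcal{P}\begin{pmatrix}r_1\\ r_2\end{pmatrix}, \] where $\mathcal{P}$ is the skew-adjoint matrix differential operator \[ \mathcal{P}=\begin{pmatrix}-2D^3+Dk_1+k_1D & -D^4+D^2k_1+2Dk_2+k_2D\\[2pt] D^4-k_1D^2+2k_2D+Dk_2 & \tfrac23\big(D^5+k_1Dk_1-k_1D^3-D^3k_1\big)+[k_2,D^2]\end{pmatrix}. \]
   Context: Let $\gamma(x,t)$ be a family of nondegenerate (starlike) curves in centroaffine $\mathbb R^3$, each parametrized by centroaffine arclength $x$, i.e. $\det(\gamma,\gamma',\gamma'')=1$, where primes denote $x$-derivatives. Then $\gamma'''=p_0\gamma+p_1\gamma'$ for the Wilczynski invariants $p_0,p_1$. Set $k_1=p_1$, $k_2=p_0-p_1'$. $D$ denotes $\partial/\partial x$, products such as $Dk_1$ mean composition of $D$ with multiplication by $k_1$, and $[\cdot,\cdot]$ is the commutator of operators. *)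

From Stdlib Require Import Reals List.
From Coquelicot Require Import Coquelicot.
Open Scope R_scope.

Definition fn2 := R -> R -> R.

Definition dX (f : fn2) : fn2 := fun x t => Derive (fun y => f y t) x.
Definition dT (f : fn2) : fn2 := fun x t => Derive (fun s => f x s) t.

Fixpoint pderivs (w : list bool) (f : fn2) : fn2 :=
  match w with
  | nil => f
  | b :: w' => (if b then dT else dX) (pderivs w' f)
  end.

Definition smooth2 (f : fn2) : Prop :=
  forall (w : list bool) (x t : R),
    ex_derive (fun y => pderivs w f y t) x /\
    ex_derive (fun s => pderivs w f x s) t /\
    continuous (fun p : R * R => pderivs w f (fst p) (snd p)) (x, t).

Definition det3 (u v w : nat -> R) : R :=
  u 0%nat * (v 1%nat * w 2%nat - v 2%nat * w 1%nat)
  - u 1%nat * (v 0%nat * w 2%nat - v 2%nat * w 0%nat)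
  + u 2%nat * (v 0%nat * w 1%nat - v 1%nat * w 0%nat).

Definition fadd (f g : fn2) : fn2 := fun x t => f x t + g x t.
Definition fmul (f g : fn2) : fn2 := fun x t => f x t * g x t.
Definition fscal (c : R) (f : fn2) : fn2 := fun x t => c * f x t.
Definition fsub (f g : fn2) : fn2 := fun x t => f x t - g x t.

Definition dX2 (f : fn2) : fn2 := dX (dX f).
Definition dX3 (f : fn2) : fn2 := dX (dX2 f).
Definition dX4 (f : fn2) : fn2 := dX (dX3 f).
Definition dX5 (f : fn2) : fn2 := dX (dX4 f).

Definition P11 (k1 k2 : fn2) (r : fn2) : fn2 :=
  fadd (fadd (fscal (-2) (dX3 r)) (dX (fmul k1 r))) (fmul k1 (dX r)).
Definition P12 (k1 k2 : fn2) (r : fn2) : fn2 :=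
  fadd (fadd (fadd (fscal (-1) (dX4 r)) (dX2 (fmul k1 r)))
             (fscal 2 (dX (fmul k2 r)))) (fmul k2 (dX r)).
Definition P21 (k1 k2 : fn2) (r : fn2) : fn2 :=
  fadd (fadd (fsub (dX4 r) (fmul k1 (dX2 r)))
             (fscal 2 (fmul k2 (dX r)))) (dX (fmul k2 r)).
(* P22 = 2/3 (D^5 + k1 D k1 - k1 D^3 - D^3 k1) + [k2, D^2],
   where [k2, D^2] = k2 D^2 - D^2 k2 *)
Definition P22 (k1 k2 : fn2) (r : fn2) : fn2 :=
  fadd (fscal (2 / 3)
          (fsub (fsub (fadd (dX5 r) (fmul k1 (dX (fmul k1 r))))
                      (fmul k1 (dX3 r)))
                (dX3 (fmul k1 r))))
       (fsub (fmul k2 (dX2 r)) (dX2 (fmul k2 r))).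

From Stdlib Require Import Reals List Lra Lia FunctionalExtensionality.
From Coquelicot Require Import Coquelicot.
Open Scope R_scope.

(* Write every x-derivative of a component of gamma in the moving frame
   (gamma, gamma', gamma''): by gamma''' = p0 gamma + p1 gamma', the coordinates
   c of a combination transform under D as
   c |-> (c0' + p0 c2, c1' + c0 + p1 c2, c2' + c1).
   Both sides of the compatibility condition (gamma''')_t = (gamma_t)''' thus
   become frame combinations with coefficients independent of the component,
   and det(gamma, gamma', gamma'') = 1 makes frame coordinates unique.
   The gamma' coordinate gives the evolution of k1 = p1, the gamma coordinate
   that of p0, hence of k2 = p0 - k1'. *)

Lemma fn2_ext (f g : fn2) : (forall x t, f x t = g x t) -> f = g.
Proof.
  intros H; apply functional_extensionality; intro x.
  apply functional_extensionality; intro t; apply H.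
Qed.

(** * Smooth functions of two variables *)

Definition pderiv (b : bool) : fn2 -> fn2 := if b then dT else dX.

Definition ex_pderiv (b : bool) (f : fn2) : Prop :=
  forall x t, if b then ex_derive (fun s => f x s) t else ex_derive (fun y => f y t) x.

Definition continuous2 (f : fn2) : Prop :=
  forall x t, continuous (fun p : R * R => f (fst p) (snd p)) (x, t).

Lemma pderivs_app w w' f : pderivs (w ++ w') f = pderivs w (pderivs w' f).
Proof. induction w as [|b w IH]; simpl; [reflexivity | now rewrite IH]. Qed.

Lemma smooth_pderivs w f : smooth2 f -> smooth2 (pderivs w f).
Proof. intros H w' x t; rewrite <- pderivs_app; apply H. Qed.

Lemma smooth_dX f : smooth2 f -> smooth2 (dX f).
Proof. exact (smooth_pderivs (false :: nil) f). Qed.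

Lemma smooth_dT f : smooth2 f -> smooth2 (dT f).
Proof. exact (smooth_pderivs (true :: nil) f). Qed.

Lemma smooth_ex_pderiv b w f : smooth2 f -> ex_pderiv b (pderivs w f).
Proof.
  intros H x t; destruct b; [exact (proj1 (proj2 (H w x t))) | exact (proj1 (H w x t))].
Qed.

Lemma smooth_continuous2 w f : smooth2 f -> continuous2 (pderivs w f).
Proof. intros H x t; exact (proj2 (proj2 (H w x t))). Qed.

Lemma pderiv_fadd b f g : ex_pderiv b f -> ex_pderiv b g ->
  pderiv b (fadd f g) = fadd (pderiv b f) (pderiv b g).
Proof.
  intros Hf Hg; apply fn2_ext; intros x t; specialize (Hf x t); specialize (Hg x t).
  destruct b; unfold pderiv, dT, dX, fadd.
  - apply (Derive_plus (fun s => f x s) (fun s => g x s)); assumption.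
  - apply (Derive_plus (fun y => f y t) (fun y => g y t)); assumption.
Qed.

Lemma pderiv_fmul b f g : ex_pderiv b f -> ex_pderiv b g ->
  pderiv b (fmul f g) = fadd (fmul (pderiv b f) g) (fmul f (pderiv b g)).
Proof.
  intros Hf Hg; apply fn2_ext; intros x t; specialize (Hf x t); specialize (Hg x t).
  destruct b; unfold pderiv, dT, dX, fadd, fmul.
  - apply (Derive_mult (fun s => f x s) (fun s => g x s)); assumption.
  - apply (Derive_mult (fun y => f y t) (fun y => g y t)); assumption.
Qed.

Lemma pderiv_const b c : pderiv b (fun _ _ => c) = fun _ _ => 0.
Proof. apply fn2_ext; intros; destruct b; unfold pderiv, dT, dX; apply Derive_const. Qed.

Lemma ex_pderiv_fadd b f g : ex_pderiv b f -> ex_pderiv b g -> ex_pderiv b (fadd f g).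
Proof.
  intros Hf Hg x t; specialize (Hf x t); specialize (Hg x t); destruct b; unfold fadd.
  - apply (ex_derive_plus (fun s => f x s) (fun s => g x s)); assumption.
  - apply (ex_derive_plus (fun y => f y t) (fun y => g y t)); assumption.
Qed.

Lemma ex_pderiv_fmul b f g : ex_pderiv b f -> ex_pderiv b g -> ex_pderiv b (fmul f g).
Proof.
  intros Hf Hg x t; specialize (Hf x t); specialize (Hg x t); destruct b; unfold fmul.
  - apply (ex_derive_mult (fun s => f x s) (fun s => g x s)); assumption.
  - apply (ex_derive_mult (fun y => f y t) (fun y => g y t)); assumption.
Qed.

Lemma ex_pderiv_const b c : ex_pderiv b (fun _ _ => c).
Proof. intros x t; destruct b; apply ex_derive_const. Qed.

Lemma continuous2_fadd f g : continuous2 f -> continuous2 g -> continuous2 (fadd f g).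
Proof.
  intros Hf Hg x t; unfold fadd.
  apply (continuous_plus (fun p : R * R => f (fst p) (snd p))
                         (fun p : R * R => g (fst p) (snd p))); auto.
Qed.

Lemma continuous2_fmul f g : continuous2 f -> continuous2 g -> continuous2 (fmul f g).
Proof.
  intros Hf Hg x t; unfold fmul.
  apply (continuous_mult (fun p : R * R => f (fst p) (snd p))
                         (fun p : R * R => g (fst p) (snd p))); auto.
Qed.

Lemma continuous2_const c : continuous2 (fun _ _ => c).
Proof. intros x t; apply continuous_const. Qed.

Lemma pderivs_fadd w f g : smooth2 f -> smooth2 g ->
  pderivs w (fadd f g) = fadd (pderivs w f) (pderivs w g).
Proof.
  intros Hf Hg; induction w as [|b w IH]; simpl; [reflexivity|].
  rewrite IH; apply (pderiv_fadd b); apply smooth_ex_pderiv; assumption.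
Qed.

Lemma smooth_fadd f g : smooth2 f -> smooth2 g -> smooth2 (fadd f g).
Proof.
  intros Hf Hg w x t; rewrite pderivs_fadd by assumption; split; [|split].
  - apply (ex_pderiv_fadd false); apply smooth_ex_pderiv; assumption.
  - apply (ex_pderiv_fadd true); apply smooth_ex_pderiv; assumption.
  - apply continuous2_fadd; apply smooth_continuous2; assumption.
Qed.

Lemma smooth_const c : smooth2 (fun _ _ => c).
Proof.
  assert (Hw : forall w, exists c', pderivs w (fun _ _ => c) = fun _ _ => c').
  { induction w as [|b w [c' IH]]; simpl; [now exists c|].
    rewrite IH; exists 0; exact (pderiv_const b c'). }
  intros w x t; destruct (Hw w) as [c' ->].
  split; [|split]; [apply ex_derive_const | apply ex_derive_const | apply continuous_const].
Qed.

(* General Leibniz rule: an iterated partial derivative of f g is the sum of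
   the products (pderivs u f) (pderivs v g) over the pairs (u, v) listed by
   [leibniz_pairs]. *)
Fixpoint sum_prod (f g : fn2) (l : list (list bool * list bool)) : fn2 :=
  match l with
  | nil => fun _ _ => 0
  | (u, v) :: l' => fadd (fmul (pderivs u f) (pderivs v g)) (sum_prod f g l')
  end.

Definition leibniz_step (b : bool) (l : list (list bool * list bool)) :=
  flat_map (fun uv => (b :: fst uv, snd uv) :: (fst uv, b :: snd uv) :: nil) l.

Fixpoint leibniz_pairs (w : list bool) : list (list bool * list bool) :=
  match w with
  | nil => (nil, nil) :: nil
  | b :: w' => leibniz_step b (leibniz_pairs w')
  end.

Section SumProd.

Variables f g : fn2.
Hypotheses (Hf : smooth2 f) (Hg : smooth2 g).

Lemma ex_pderiv_sum_prod b l : ex_pderiv b (sum_prod f g l).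
Proof.
  induction l as [|[u v] l IH]; simpl; [apply ex_pderiv_const|].
  apply ex_pderiv_fadd; [apply ex_pderiv_fmul; apply smooth_ex_pderiv|]; assumption.
Qed.

Lemma continuous2_sum_prod l : continuous2 (sum_prod f g l).
Proof.
  induction l as [|[u v] l IH]; simpl; [apply continuous2_const|].
  apply continuous2_fadd; [apply continuous2_fmul; apply smooth_continuous2|]; assumption.
Qed.

Lemma pderiv_sum_prod b l : pderiv b (sum_prod f g l) = sum_prod f g (leibniz_step b l).
Proof.
  induction l as [|[u v] l IH]; simpl; [apply pderiv_const|].
  rewrite pderiv_fadd, pderiv_fmul, IH;
    [| apply smooth_ex_pderiv; assumption | apply smooth_ex_pderiv; assumption
     | apply ex_pderiv_fmul; apply smooth_ex_pderiv; assumption | apply ex_pderiv_sum_prod].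
  apply fn2_ext; intros x t; unfold leibniz_step, fadd, fmul, pderiv.
  cbn [sum_prod flat_map fst snd pderivs app]; ring.
Qed.

Lemma pderivs_fmul w : pderivs w (fmul f g) = sum_prod f g (leibniz_pairs w).
Proof.
  induction w as [|b w IH]; simpl.
  - apply fn2_ext; intros; unfold fadd, fmul; simpl; ring.
  - rewrite IH; apply (pderiv_sum_prod b).
Qed.

End SumProd.

Lemma smooth_fmul f g : smooth2 f -> smooth2 g -> smooth2 (fmul f g).
Proof.
  intros Hf Hg w x t; rewrite pderivs_fmul by assumption; split; [|split].
  - apply (ex_pderiv_sum_prod f g Hf Hg false).
  - apply (ex_pderiv_sum_prod f g Hf Hg true).
  - apply continuous2_sum_prod; assumption.
Qed.

Lemma smooth_fscal c f : smooth2 f -> smooth2 (fscal c f).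
Proof. intros H; apply (smooth_fmul (fun _ _ => c) f); [apply smooth_const | exact H]. Qed.

Lemma fsub_fadd_fscal f g : fsub f g = fadd f (fscal (-1) g).
Proof. apply fn2_ext; intros; unfold fsub, fadd, fscal; ring. Qed.

Lemma smooth_fsub f g : smooth2 f -> smooth2 g -> smooth2 (fsub f g).
Proof.
  intros Hf Hg; rewrite fsub_fadd_fscal; apply smooth_fadd; [|apply smooth_fscal]; assumption.
Qed.

(** * Differentiation rules *)

Section Rules.

Variables f g : fn2.
Hypotheses (Hf : smooth2 f) (Hg : smooth2 g).

Lemma dX_fadd : dX (fadd f g) = fadd (dX f) (dX g).
Proof. apply (pderiv_fadd false); apply (smooth_ex_pderiv _ nil); assumption. Qed.

Lemma dT_fadd : dT (fadd f g) = fadd (dT f) (dT g).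
Proof. apply (pderiv_fadd true); apply (smooth_ex_pderiv _ nil); assumption. Qed.

Lemma dX_fmul : dX (fmul f g) = fadd (fmul (dX f) g) (fmul f (dX g)).
Proof. apply (pderiv_fmul false); apply (smooth_ex_pderiv _ nil); assumption. Qed.

Lemma dT_fmul : dT (fmul f g) = fadd (fmul (dT f) g) (fmul f (dT g)).
Proof. apply (pderiv_fmul true); apply (smooth_ex_pderiv _ nil); assumption. Qed.

Lemma dX_fsub : dX (fsub f g) = fsub (dX f) (dX g).
Proof.
  apply fn2_ext; intros x t; unfold dX, fsub.
  apply (Derive_minus (fun y => f y t) (fun y => g y t));
    [apply (smooth_ex_pderiv false nil f Hf) | apply (smooth_ex_pderiv false nil g Hg)].
Qed.

Lemma dT_fsub : dT (fsub f g) = fsub (dT f) (dT g).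
Proof.
  apply fn2_ext; intros x t; unfold dT, fsub.
  apply (Derive_minus (fun s => f x s) (fun s => g x s));
    [apply (smooth_ex_pderiv true nil f Hf) | apply (smooth_ex_pderiv true nil g Hg)].
Qed.

Lemma dT_dX : dT (dX f) = dX (dT f).
Proof.
  apply fn2_ext; intros x t; unfold dT, dX; symmetry; apply Schwarz.
  - exists (mkposreal 1 Rlt_0_1); intros u v _ _.
    split; [|split; [|split]].
    + apply (Hf nil u v).
    + apply (Hf nil u v).
    + apply (Hf (true :: nil) u v).
    + apply (Hf (false :: nil) u v).
  - apply continuity_2d_pt_filterlim; apply (Hf (false :: true :: nil) x t).
  - apply continuity_2d_pt_filterlim; apply (Hf (true :: false :: nil) x t).
Qed.

End Rules.

Lemma dX_fscal c f : dX (fscal c f) = fscal c (dX f).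
Proof. apply fn2_ext; intros x t; unfold dX, fscal; apply (Derive_scal (fun y => f y t)). Qed.

Lemma dT_fscal c f : dT (fscal c f) = fscal c (dT f).
Proof. apply fn2_ext; intros x t; unfold dT, fscal; apply (Derive_scal (fun s => f x s)). Qed.

Lemma dT_dX3 f : smooth2 f -> dT (dX3 f) = dX3 (dT f).
Proof.
  intros H; unfold dX3, dX2.
  rewrite (dT_dX (dX (dX f))), (dT_dX (dX f)), (dT_dX f);
    auto using smooth_dX.
Qed.

Ltac solve_smooth :=
  match goal with
  | |- smooth2 (fadd _ _) => apply smooth_fadd; solve_smooth
  | |- smooth2 (fmul _ _) => apply smooth_fmul; solve_smooth
  | |- smooth2 (fsub _ _) => apply smooth_fsub; solve_smooth
  | |- smooth2 (fscal _ _) => apply smooth_fscal; solve_smooth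
  | |- smooth2 (dX _) => apply smooth_dX; solve_smooth
  | |- smooth2 (dT _) => apply smooth_dT; solve_smooth
  | |- smooth2 (dX2 _) => unfold dX2; solve_smooth
  | |- smooth2 (dX3 _) => unfold dX3, dX2; solve_smooth
  | |- smooth2 (fun _ _ => _) => apply smooth_const
  | |- smooth2 _ => assumption
  end.

Ltac expand_derivs :=
  repeat match goal with
  | |- context [dX (fadd ?f ?g)] => rewrite (dX_fadd f g) by solve_smooth
  | |- context [dX (fsub ?f ?g)] => rewrite (dX_fsub f g) by solve_smooth
  | |- context [dX (fmul ?f ?g)] => rewrite (dX_fmul f g) by solve_smooth
  | |- context [dX (fscal ?c ?f)] => rewrite (dX_fscal c f)
  | |- context [dT (fadd ?f ?g)] => rewrite (dT_fadd f g) by solve_smooth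
  | |- context [dT (fsub ?f ?g)] => rewrite (dT_fsub f g) by solve_smooth
  | |- context [dT (fmul ?f ?g)] => rewrite (dT_fmul f g) by solve_smooth
  | |- context [dT (fscal ?c ?f)] => rewrite (dT_fscal c f)
  end.

(** * Moving frames *)

Lemma det3_lin_zero (u v w : nat -> R) a b c :
  (forall i, (i < 3)%nat -> a * u i + b * v i + c * w i = 0) ->
  a * det3 u v w = 0 /\ b * det3 u v w = 0 /\ c * det3 u v w = 0.
Proof.
  intros H.
  pose proof (H 0%nat ltac:(lia)); pose proof (H 1%nat ltac:(lia));
    pose proof (H 2%nat ltac:(lia)).
  pose (z := fun i => a * u i + b * v i + c * w i).
  split; [|split].
  - transitivity (det3 z v w); [unfold det3, z; ring|].
    unfold det3, z; rewrite H0, H1, H2; ring.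
  - transitivity (det3 u z w); [unfold det3, z; ring|].
    unfold det3, z; rewrite H0, H1, H2; ring.
  - transitivity (det3 u v z); [unfold det3, z; ring|].
    unfold det3, z; rewrite H0, H1, H2; ring.
Qed.

Lemma det3_coords_unique (u v w : nat -> R) a b c :
  det3 u v w = 1 ->
  (forall i, (i < 3)%nat -> a * u i + b * v i + c * w i = 0) ->
  a = 0 /\ b = 0 /\ c = 0.
Proof.
  intros Hdet H; destruct (det3_lin_zero u v w a b c H) as (Ha & Hb & Hc).
  rewrite Hdet, Rmult_1_r in Ha, Hb, Hc; auto.
Qed.

Lemma det3_wilczynski_coefs (u v w z : nat -> R) p q :
  det3 u v w = 1 -> (forall i, (i < 3)%nat -> z i = p * u i + q * v i) ->
  p = det3 z v w /\ q = det3 u z w.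
Proof.
  intros Hdet H; split.
  - transitivity (p * det3 u v w); [rewrite Hdet; ring|].
    unfold det3; rewrite (H 0%nat), (H 1%nat), (H 2%nat) by lia; ring.
  - transitivity (q * det3 u v w); [rewrite Hdet; ring|].
    unfold det3; rewrite (H 0%nat), (H 1%nat), (H 2%nat) by lia; ring.
Qed.

Lemma smooth_det3 (A B C : nat -> fn2) :
  (forall i, (i < 3)%nat -> smooth2 (A i) /\ smooth2 (B i) /\ smooth2 (C i)) ->
  smooth2 (fun x t => det3 (fun i => A i x t) (fun i => B i x t) (fun i => C i x t)).
Proof.
  intros H.
  destruct (H 0%nat ltac:(lia)) as (? & ? & ?), (H 1%nat ltac:(lia)) as (? & ? & ?),
           (H 2%nat ltac:(lia)) as (? & ? & ?).
  change (smooth2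
    (fadd (fsub (fmul (A 0%nat) (fsub (fmul (B 1%nat) (C 2%nat)) (fmul (B 2%nat) (C 1%nat))))
                (fmul (A 1%nat) (fsub (fmul (B 0%nat) (C 2%nat)) (fmul (B 2%nat) (C 0%nat)))))
          (fmul (A 2%nat) (fsub (fmul (B 0%nat) (C 1%nat)) (fmul (B 1%nat) (C 0%nat)))))).
  solve_smooth.
Qed.

Lemma smooth_wilczynski_coefs (gamma : nat -> fn2) (p0 p1 : fn2) :
  (forall i, (i < 3)%nat -> smooth2 (gamma i)) ->
  (forall x t, det3 (fun i => gamma i x t) (fun i => dX (gamma i) x t)
                    (fun i => dX2 (gamma i) x t) = 1) ->
  (forall i x t, (i < 3)%nat ->
     dX3 (gamma i) x t = p0 x t * gamma i x t + p1 x t * dX (gamma i) x t) ->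
  smooth2 p0 /\ smooth2 p1.
Proof.
  intros Hg Hdet Hwil.
  assert (Hcoef : forall x t,
    p0 x t = det3 (fun i => dX3 (gamma i) x t) (fun i => dX (gamma i) x t)
                  (fun i => dX2 (gamma i) x t) /\
    p1 x t = det3 (fun i => gamma i x t) (fun i => dX3 (gamma i) x t)
                  (fun i => dX2 (gamma i) x t))
    by (intros x t; apply det3_wilczynski_coefs; auto).
  assert (Hsm : forall i, (i < 3)%nat ->
    smooth2 (gamma i) /\ smooth2 (dX (gamma i)) /\ smooth2 (dX2 (gamma i)) /\
    smooth2 (dX3 (gamma i)))
    by (intros i Hi; specialize (Hg i Hi); split; [|split; [|split]]; solve_smooth).
  split.
  - replace p0 with (fun x t => det3 (fun i => dX3 (gamma i) x t)
      (fun i => dX (gamma i) x t) (fun i => dX2 (gamma i) x t))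
      by (apply fn2_ext; intros; symmetry; apply Hcoef).
    apply smooth_det3; intros i Hi; specialize (Hsm i Hi); tauto.
  - replace p1 with (fun x t => det3 (fun i => gamma i x t)
      (fun i => dX3 (gamma i) x t) (fun i => dX2 (gamma i) x t))
      by (apply fn2_ext; intros; symmetry; apply Hcoef).
    apply smooth_det3; intros i Hi; specialize (Hsm i Hi); tauto.
Qed.

Record frame := Frame { fr0 : fn2; fr1 : fn2; fr2 : fn2 }.

Definition frame_comb (c : frame) (G : fn2) : fn2 :=
  fadd (fadd (fmul (fr0 c) G) (fmul (fr1 c) (dX G))) (fmul (fr2 c) (dX2 G)).

Definition frame_add (c d : frame) : frame :=
  Frame (fadd (fr0 c) (fr0 d)) (fadd (fr1 c) (fr1 d)) (fadd (fr2 c) (fr2 d)).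

Definition frame_mul (f : fn2) (c : frame) : frame :=
  Frame (fmul f (fr0 c)) (fmul f (fr1 c)) (fmul f (fr2 c)).

Definition smooth_frame (c : frame) : Prop :=
  smooth2 (fr0 c) /\ smooth2 (fr1 c) /\ smooth2 (fr2 c).

Lemma frame_comb_inj (gamma : nat -> fn2) (c d : frame) :
  (forall x t, det3 (fun i => gamma i x t) (fun i => dX (gamma i) x t)
                    (fun i => dX2 (gamma i) x t) = 1) ->
  (forall i, (i < 3)%nat -> frame_comb c (gamma i) = frame_comb d (gamma i)) ->
  forall x t, fr0 c x t = fr0 d x t /\ fr1 c x t = fr1 d x t /\ fr2 c x t = fr2 d x t.
Proof.
  intros Hdet H x t.
  destruct (det3_coords_unique _ _ _ (fr0 c x t - fr0 d x t) (fr1 c x t - fr1 d x t)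
              (fr2 c x t - fr2 d x t) (Hdet x t)) as (H0 & H1 & H2).
  - intros i Hi; pose proof (f_equal (fun F => F x t) (H i Hi)) as E.
    unfold frame_comb, fadd, fmul in E; simpl in E; lra.
  - lra.
Qed.

Section Frame.

Variables p0 p1 : fn2.
Hypotheses (Hp0 : smooth2 p0) (Hp1 : smooth2 p1).

Definition frame_dX (c : frame) : frame :=
  Frame (fadd (dX (fr0 c)) (fmul p0 (fr2 c)))
        (fadd (dX (fr1 c)) (fadd (fr0 c) (fmul p1 (fr2 c))))
        (fadd (dX (fr2 c)) (fr1 c)).

Definition frame_dX3 (c : frame) : frame := frame_dX (frame_dX (frame_dX c)).

(* Coordinates of (G''')_t = (p0 G + p1 G')_t when G_t has coordinates r. *)
Definition frame_dT_dX3 (r : frame) : frame :=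
  frame_add (Frame (dT p0) (dT p1) (fun _ _ => 0))
            (frame_add (frame_mul p0 r) (frame_mul p1 (frame_dX r))).

Lemma smooth_frame_dX c : smooth_frame c -> smooth_frame (frame_dX c).
Proof. intros (? & ? & ?); split; [|split]; simpl; solve_smooth. Qed.

Variable G : fn2.
Hypotheses (HG : smooth2 G) (Hwil : dX3 G = fadd (fmul p0 G) (fmul p1 (dX G))).

Lemma dX_frame_comb c : smooth_frame c -> dX (frame_comb c G) = frame_comb (frame_dX c) G.
Proof.
  intros (? & ? & ?); unfold frame_comb, frame_dX; expand_derivs.
  change (dX (dX2 G)) with (dX3 G); rewrite Hwil.
  apply fn2_ext; intros; unfold fadd, fmul, dX2; simpl; ring.
Qed.

Variable r : frame.
Hypotheses (Hr : smooth_frame r) (Hevol : dT G = frame_comb r G).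

Lemma dX3_dT_frame_comb : dX3 (dT G) = frame_comb (frame_dX3 r) G.
Proof.
  unfold dX3, dX2, frame_dX3; rewrite Hevol.
  rewrite !dX_frame_comb; auto using smooth_frame_dX.
Qed.

Lemma dT_dX3_frame_comb : dT (dX3 G) = frame_comb (frame_dT_dX3 r) G.
Proof.
  destruct Hr as (? & ? & ?).
  rewrite Hwil; expand_derivs.
  rewrite dT_dX, Hevol, dX_frame_comb by auto.
  apply fn2_ext; intros; unfold frame_comb, frame_dT_dX3; simpl; unfold fadd, fmul, dX2; ring.
Qed.

End Frame.

(** * Evolution of the invariants *)

Section Flow.

Variables p0 p1 r1 r2 : fn2.
Hypotheses (Hp0 : smooth2 p0) (Hp1 : smooth2 p1) (Hr1 : smooth2 r1) (Hr2 : smooth2 r2).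

Definition nonstretching_r0 : fn2 :=
  fsub (fscal (-1) (dX r1)) (fscal (/ 3) (fadd (dX2 r2) (fmul (fscal 2 p1) r2))).

Definition evol_frame : frame := Frame nonstretching_r0 r1 r2.

Lemma smooth_evol_frame : smooth_frame evol_frame.
Proof. unfold evol_frame, nonstretching_r0; split; [|split]; simpl; solve_smooth. Qed.

Let k2 := fsub p0 (dX p1).
Let compat := frame_dT_dX3 p0 p1 evol_frame.
Let flow := frame_dX3 p0 p1 evol_frame.

Lemma dT_k1_of_frame_coord :
  (forall x t, fr1 compat x t = fr1 flow x t) ->
  forall x t, dT p1 x t = P11 p1 k2 r1 x t + P12 p1 k2 r2 x t.
Proof.
  intros H x t; specialize (H x t).
  change (dT p1 x t + (p0 x t * r1 x t + p1 x t * fr1 (frame_dX p0 p1 evol_frame) x t)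
          = fr1 flow x t) in H.
  replace (dT p1 x t) with (fr1 flow x t - (p0 x t * r1 x t
             + p1 x t * fr1 (frame_dX p0 p1 evol_frame) x t)) by lra.
  unfold flow, frame_dX3, k2, P11, P12, evol_frame, nonstretching_r0, dX4, dX3, dX2;
    simpl; expand_derivs.
  unfold fadd, fmul, fsub, fscal; field.
Qed.

Lemma dT_k2_of_frame_coord :
  (forall x t, dT p1 x t = P11 p1 k2 r1 x t + P12 p1 k2 r2 x t) ->
  (forall x t, fr0 compat x t = fr0 flow x t) ->
  forall x t, dT k2 x t = P21 p1 k2 r1 x t + P22 p1 k2 r2 x t.
Proof.
  intros Hk1 H x t; specialize (H x t).
  change (dT p0 x t + (p0 x t * nonstretching_r0 x t
                       + p1 x t * fr0 (frame_dX p0 p1 evol_frame) x t)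
          = fr0 flow x t) in H.
  assert (Hk1f : dT p1 = fadd (P11 p1 k2 r1) (P12 p1 k2 r2)) by (apply fn2_ext; exact Hk1).
  assert (Hk2 : dT k2 x t = dT p0 x t - dX (dT p1) x t)
    by (unfold k2; rewrite dT_fsub, dT_dX by solve_smooth; reflexivity).
  rewrite Hk2, Hk1f.
  replace (dT p0 x t) with (fr0 flow x t - (p0 x t * nonstretching_r0 x t
             + p1 x t * fr0 (frame_dX p0 p1 evol_frame) x t)) by lra.
  unfold flow, frame_dX3, k2, P11, P12, P21, P22, evol_frame, nonstretching_r0,
    dX5, dX4, dX3, dX2; simpl; expand_derivs.
  unfold fadd, fmul, fsub, fscal; field.
Qed.

End Flow.

Theorem mainTheorem1
  (gamma : nat -> R -> R -> R)   (* components gamma 0, gamma 1, gamma 2 of gamma(x,t) in R^3 *)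
  (p0 p1 r1 r2 : R -> R -> R)
  (Hsmooth : forall i : nat, (i < 3)%nat -> smooth2 (gamma i))
  (Hr1 : smooth2 r1) (Hr2 : smooth2 r2)
  (Harc : forall x t : R,
      det3 (fun i => gamma i x t) (fun i => dX (gamma i) x t)
           (fun i => dX2 (gamma i) x t) = 1)
  (Hwil : forall (i : nat) (x t : R), (i < 3)%nat ->
      dX3 (gamma i) x t = p0 x t * gamma i x t + p1 x t * dX (gamma i) x t)
  (Hevol : forall (i : nat) (x t : R), (i < 3)%nat ->
      dT (gamma i) x t =
        (- dX r1 x t - / 3 * (dX2 r2 x t + 2 * p1 x t * r2 x t)) * gamma i x t
        + r1 x t * dX (gamma i) x t + r2 x t * dX2 (gamma i) x t) :
  let k1 := p1 in
  let k2 := fun x t => p0 x t - dX p1 x t in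
  forall x t : R,
    dT k1 x t = P11 k1 k2 r1 x t + P12 k1 k2 r2 x t /\
    dT k2 x t = P21 k1 k2 r1 x t + P22 k1 k2 r2 x t.
Proof.
  intros k1 k2.
  destruct (smooth_wilczynski_coefs gamma p0 p1 Hsmooth Harc Hwil) as [Hp0 Hp1].
  pose proof (smooth_evol_frame p1 r1 r2 Hp1 Hr1 Hr2) as Hr.
  assert (Hcompat : forall i, (i < 3)%nat ->
    frame_comb (frame_dT_dX3 p0 p1 (evol_frame p1 r1 r2)) (gamma i) =
    frame_comb (frame_dX3 p0 p1 (evol_frame p1 r1 r2)) (gamma i)).
  { intros i Hi.
    assert (HW : dX3 (gamma i) = fadd (fmul p0 (gamma i)) (fmul p1 (dX (gamma i))))
      by (apply fn2_ext; intros; apply Hwil, Hi).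
    assert (HE : dT (gamma i) = frame_comb (evol_frame p1 r1 r2) (gamma i)).
    { apply fn2_ext; intros x t; rewrite (Hevol i x t Hi).
      unfold frame_comb, evol_frame, nonstretching_r0; simpl.
      unfold fadd, fmul, fsub, fscal, dX2; ring. }
    rewrite <- dT_dX3_frame_comb, <- dX3_dT_frame_comb by auto.
    apply dT_dX3, Hsmooth, Hi. }
  pose proof (frame_comb_inj gamma _ _ Harc Hcompat) as Hcoord.
  assert (Hk1 := dT_k1_of_frame_coord p0 p1 r1 r2 Hp0 Hp1 Hr1 Hr2
                   (fun x t => proj1 (proj2 (Hcoord x t)))).
  intros x t; split; [apply Hk1|].
  exact (dT_k2_of_frame_coord p0 p1 r1 r2 Hp0 Hp1 Hr1 Hr2 Hk1
           (fun x t => proj1 (Hcoord x t)) x t).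
Qed.
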